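(* Let $J\subseteq\mathbb R$ be an open interval and $A:J\to\mathbb R$ of class $C^1$. For every three-tuple $\mathbf z=(z_1,z_2,z_3)$ of distinct points on $\Gamma=\{x+iA(x):x\in J\}$, with $z_j=x_j+iA(x_j)$, one has $$\mathtt S[\mathrm{Re}K_\Gamma](\mathbf z)=2\sum_{\substack{j=1\\k<l}}^3\frac{1}{s^2(x_j)\ell_k^2\ell_l^2}\Bigl[A'(x_j)(x_j-x_k)-\bigl(A(x_j)-A(x_k)\bigr)\Bigr]\Bigl[A'(x_j)(x_j-x_l)-\bigl(A(x_j)-A(x_l)\bigr)\Bigr],$$ $$\mathtt S[\mathrm{Im}K_\Gamma](\mathbf z)=2\sum_{\substack{j=1\\k<l}}^3\frac{1}{s^2(x_j)\ell_k^2\ell_l^2}\Bigl[(x_k-x_j)+A'(x_j)\bigl(A(x_k)-A(x_j)\bigr)\Bigr]\Bigl[(x_l-x_j)+A'(x_j)\bigl(A(x_l)-A(x_j)\bigr)\Bigr].$$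
   Context: In the sums, for each $j\in\{1,2,3\}$ the indices $k<l$ are the two elements of $\{1,2,3\}\setminus\{j\}$. Notation: $s^2(x)=1+(A'(x))^2$, and $\ell_j^2=(x_l-x_k)^2+(A(x_l)-A(x_k))^2$ whenever $\{j,k,l\}=\{1,2,3\}$. The kernel (normalizing factor $1/(2\pi)$ omitted) is $K_\Gamma(w,z)=\dfrac{A'(x)-i}{s(x)\,[\,x-y+i(A(x)-A(y))\,]}$ for $w=x+iA(x)$, $z=y+iA(y)$, $x\neq y$, with real and imaginary parts $\mathrm{Re}K_\Gamma$, $\mathrm{Im}K_\Gamma$. For a real-valued $K$ and distinct $z_1,z_2,z_3$, $\mathtt S[K](\mathbf z)=\sum_{\sigma\in S_3}K(z_{\sigma(1)},z_{\sigma(2)})K(z_{\sigma(1)},z_{\sigma(3)})$. *)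

From HB Require Import structures.
From mathcomp Require Import all_boot all_order all_algebra all_fingroup.
From mathcomp Require Import all_classical all_reals all_analysis.
From mathcomp Require Import complex.
Set Implicit Arguments. Unset Strict Implicit. Unset Printing Implicit Defensive.
Import Order.TTheory GRing.Theory Num.Theory.
Import numFieldNormedType.Exports.
Local Open Scope ring_scope.

Section Defs.
Variable R : realType.

Definition open_itv (a b : \bar R) : set R := [set x | (a < x%:E)%E /\ (x%:E < b)%E].

Definition C1_on (J : set R) (A : R -> R) : Prop :=
  (forall x, J x -> derivable A x 1) /\
  (forall x, J x -> {for x, continuous (derive1 A)}).

Definition gpt (A : R -> R) (x : R) : R[i] := (x +i* A x)%C.

Definition sfun (A : R -> R) (x : R) : R := Num.sqrt (1 + (derive1 A x) ^+ 2).

(* The kernel K_Gamma(w, z) for w = x + iA(x), z = y + iA(y) (x = Re w, y = Re z),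
   normalizing factor 1/(2 pi) omitted. *)
Definition KGamma (A : R -> R) (w z : R[i]) : R[i] :=
  let x := complex.Re w in let y := complex.Re z in
  (((derive1 A x) +i* (-1)) / ((sfun A x)%:C * ((x - y) +i* (A x - A y))))%C.

Definition Sop (T : Type) (K : T -> T -> R) (z : 'I_3 -> T) : R :=
  \sum_(s : 'S_3) K (z (s 0)) (z (s 1)) * K (z (s 0)) (z (s 2%:R)).

Definition dist2 (A : R -> R) (a b : R) : R := (b - a) ^+ 2 + (A b - A a) ^+ 2.

(* summand of the Re formula for index j and the other indices k < l:
   1/(s^2(x_j) l_k^2 l_l^2) [..][..], with l_k^2 = |z_j - z_l|^2, l_l^2 = |z_j - z_k|^2. *)
Definition termRe (A : R -> R) (xj xk xl : R) : R :=
  ((sfun A xj) ^+ 2 * dist2 A xj xl * dist2 A xj xk)^-1 *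
  ((derive1 A xj) * (xj - xk) - (A xj - A xk)) *
  ((derive1 A xj) * (xj - xl) - (A xj - A xl)).

Definition termIm (A : R -> R) (xj xk xl : R) : R :=
  ((sfun A xj) ^+ 2 * dist2 A xj xl * dist2 A xj xk)^-1 *
  ((xk - xj) + (derive1 A xj) * (A xk - A xj)) *
  ((xl - xj) + (derive1 A xj) * (A xl - A xj)).

End Defs.

(* Summing over S_3 pairs each permutation with its composite with the
   transposition (2 3), which gives the same product, so S[K](z) is twice
   sum_j K(z_j, z_k) K(z_j, z_l).  Each factor is explicit: multiplying by the
   conjugate, K_Gamma(z_j, z_k) = (A'(x_j) - i)((x_j - x_k) - i(A(x_j) - A(x_k)))
   / (s(x_j) abs(z_j - z_k)^2), whose real and imaginary parts are the
   brackets of the statement divided by s(x_j) abs(z_j - z_k)^2. *)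

From Pilot Require Import Defs.
From HB Require Import structures.
From mathcomp Require Import all_boot all_order all_algebra all_fingroup.
From mathcomp Require Import all_classical all_reals all_analysis.
From mathcomp Require Import complex.
From mathcomp Require Import ring.
Import Order.TTheory GRing.Theory Num.Theory.
Import numFieldNormedType.Exports.
Local Open Scope ring_scope.

Lemma ord3P (i : 'I_3) : [\/ i = 0, i = 1 | i = 2%:R].
Proof.
case: i => -[|[|[|//]]] ?;
  [constructor 1 | constructor 2 | constructor 3]; exact: val_inj.
Qed.

Definition triple_of_perm3 (s : 'S_3) := (s 0, s 1, s 2%:R).

Lemma triple_of_perm3_inj : injective triple_of_perm3.
Proof.
by move=> s t [e0 e1 e2]; apply/permP => i; case: (ord3P i) => ->.
Qed.

Lemma triple_of_perm3_image :
  triple_of_perm3 @: [set: 'S_3]%SET =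
  [set t | [&& t.1.1 != t.1.2, t.1.1 != t.2 & t.1.2 != t.2]].
Proof.
apply/setP => -[[i j] k]; rewrite inE /=; apply/imsetP/and3P => [[s _ [-> -> ->]]|].
  by rewrite !(inj_eq perm_inj).
move=> [ij ik jk].
pose f (n : 'I_3) := if n == 0 then i else if n == 1 then j else k.
have f_inj : injective f.
  move=> n m; rewrite /f.
  by case: (ord3P n) => ->; case: (ord3P m) => -> //= eq_nm;
    move: ij ik jk; rewrite eq_nm eqxx.
by exists (perm f_inj); rewrite ?inE // /triple_of_perm3 !permE.
Qed.

Lemma sum_triple (V : nmodType) (I J K : finType) (F : I * J * K -> V) :
  \sum_t F t = \sum_i \sum_j \sum_k F (i, j, k).
Proof.
rewrite (pair_bigA _ (fun i j => \sum_k F (i, j, k))) /=.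
rewrite (pair_bigA _ (fun ij k => F (ij.1, ij.2, k))).
by apply: eq_bigr => -[[]].
Qed.

Lemma sum_perm3 (V : nmodType) (G : 'I_3 -> 'I_3 -> 'I_3 -> V) :
  \sum_(s : 'S_3) G (s 0) (s 1) (s 2%:R) =
  G 0 1 2%:R + G 0 2%:R 1 + G 1 0 2%:R + G 1 2%:R 0 + G 2%:R 0 1 + G 2%:R 1 0.
Proof.
rewrite (eq_bigl [in [set: 'S_3]%SET]); last by move=> s; rewrite inE.
rewrite -(big_imset (fun t => G t.1.1 t.1.2 t.2) (in2W triple_of_perm3_inj)).
rewrite triple_of_perm3_image big_mkcond sum_triple /=.
rewrite !big_ord_recl !big_ord0 !inE /= !add0r !addr0 !addrA.
have -> : lift ord0 (lift ord0 ord0) = 2%:R :> 'I_3 by apply/val_inj.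
by have -> : lift ord0 ord0 = 1 :> 'I_3 by apply/val_inj.
Qed.

Lemma Sop_expand (R : realType) (T : Type) (K : T -> T -> R) (z : 'I_3 -> T) :
  Sop K z = 2 * (K (z 0) (z 1) * K (z 0) (z 2%:R)
                 + K (z 1) (z 0) * K (z 1) (z 2%:R)
                 + K (z 2%:R) (z 0) * K (z 2%:R) (z 1)).
Proof.
by rewrite /Sop (@sum_perm3 _ (fun i j k => K (z i) (z j) * K (z i) (z k))); ring.
Qed.

Section ComplexQuotient.
Variable R : rcfType.

Lemma Re_div_scale (p q e c d : R) :
  complex.Re ((p +i* q) / (e%:C * (c +i* d)))%C
  = (p * c + q * d) / (e * (c ^+ 2 + d ^+ 2)).
Proof.
rewrite /= !mul0r subr0 addr0 !exprMn -mulrDr.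
have [->|e0] := eqVneq e 0.
  by rewrite !(mul0r, expr0n, invr0, mulr0, oppr0, subr0).
have [->|N0] := eqVneq (c ^+ 2 + d ^+ 2) 0.
  by rewrite !(mulr0, invr0, oppr0, subr0).
by field; rewrite e0 N0.
Qed.

Lemma Im_div_scale (p q e c d : R) :
  complex.Im ((p +i* q) / (e%:C * (c +i* d)))%C
  = (q * c - p * d) / (e * (c ^+ 2 + d ^+ 2)).
Proof.
rewrite /= !mul0r subr0 addr0 !exprMn -mulrDr.
have [->|e0] := eqVneq e 0.
  by rewrite !(mul0r, expr0n, invr0, mulr0, oppr0, addr0).
have [->|N0] := eqVneq (c ^+ 2 + d ^+ 2) 0.
  by rewrite !(mulr0, invr0, oppr0, addr0).
by field; rewrite e0 N0.
Qed.

End ComplexQuotient.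

Section KernelParts.
Variables (R : realType) (A : R -> R).

Lemma Re_KGamma (u v : R) :
  complex.Re (KGamma A (gpt A u) (gpt A v))
  = (derive1 A u * (u - v) - (A u - A v)) / (Defs.sfun A u * dist2 A u v).
Proof.
rewrite /KGamma /gpt Re_div_scale /= /dist2.
by congr (_ / (_ * _)); ring.
Qed.

Lemma Im_KGamma (u v : R) :
  complex.Im (KGamma A (gpt A u) (gpt A v))
  = - ((u - v) + derive1 A u * (A u - A v)) / (Defs.sfun A u * dist2 A u v).
Proof.
rewrite /KGamma /gpt Im_div_scale /= /dist2.
by congr (_ / (_ * _)); ring.
Qed.

Lemma Re_KGamma_mul (u v w : R) :
  complex.Re (KGamma A (gpt A u) (gpt A v)) * complex.Re (KGamma A (gpt A u) (gpt A w))
  = termRe A u v w.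
Proof. by rewrite !Re_KGamma /termRe expr2 !invfM; ring. Qed.

Lemma Im_KGamma_mul (u v w : R) :
  complex.Im (KGamma A (gpt A u) (gpt A v)) * complex.Im (KGamma A (gpt A u) (gpt A w))
  = termIm A u v w.
Proof. by rewrite !Im_KGamma /termIm expr2 !invfM; ring. Qed.

End KernelParts.

Theorem lemma2p1 (R : realType) (a b : \bar R) (A : R -> R)
  (hA : C1_on (open_itv a b) A)
  (x : 'I_3 -> R) (hxJ : forall j, open_itv a b (x j))
  (hdist : injective (fun j => gpt A (x j))) :
  Sop (fun w z => complex.Re (KGamma A w z)) (fun j => gpt A (x j)) =
    2 * (termRe A (x 0) (x 1) (x 2%:R) + termRe A (x 1) (x 0) (x 2%:R)
         + termRe A (x 2%:R) (x 0) (x 1))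
  /\
  Sop (fun w z => complex.Im (KGamma A w z)) (fun j => gpt A (x j)) =
    2 * (termIm A (x 0) (x 1) (x 2%:R) + termIm A (x 1) (x 0) (x 2%:R)
         + termIm A (x 2%:R) (x 0) (x 1)).
Proof.
(* None of the hypotheses is needed: the identity holds summand by summand, and
   since x / 0 = 0 a coincident pair of points contributes 0 to both sides. *)
by rewrite !Sop_expand /= !Re_KGamma_mul !Im_KGamma_mul.
Qed.
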